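(* Let $\Gamma$ be a finite connected $(G,3)$-geodesic-transitive graph of girth $4$ or $5$, with $G\le\mathrm{Aut}(\Gamma)$. Suppose that $G$ has a normal subgroup $N$ whose orbits on $V(\Gamma)$ all have size $m\ge2$, such that $\Gamma_N\cong K_{r,r}$ with $r\ge3$ and $\Gamma$ is a cover of $\Gamma_N$. Then $\Gamma$ is bipartite with girth $4$ and diameter at least $4$, and one of the following holds: (1) $m=2$ and $\Gamma$ is a Hadamard graph of valency $r$; (2) $\Gamma$ is a $G$-distance-transitive antipodal graph $mK_{r,r}$ which is the incidence graph of a resolvable divisible design $RGD(r,c_2,m)$, where $r=mc_2$, such that any two blocks from different parallel classes contain exactly $c_2$ common points; $\Gamma$ has intersection array $(r,r-1,r-c_2,1;1,c_2,r-1,r)$, and $c_2\ge2$, $m\ge3$; (3) $\Gamma$ is not $(G,4)$-distance-transitive.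
   Context: An $s$-geodesic is a path $(v_0,\dots,v_s)$ with $d(v_0,v_s)=s$; $\Gamma$ is $(G,s)$-geodesic-transitive if it has an $s$-geodesic and $G$ is transitive on $i$-geodesics for each $i\le s$; $(G,s)$-distance-transitive if for each $i\le s$, $G$ is transitive on ordered pairs at distance $i$, and $G$-distance-transitive if this holds for $s=\mathrm{diam}(\Gamma)$. $\Gamma_N$ has the $N$-orbits as vertices, distinct orbits adjacent iff some edge joins them; $\Gamma$ is a cover of $\Gamma_N$ if each vertex of an orbit $B$ has exactly one neighbour in each orbit adjacent to $B$. $c_2$ is the number of common neighbours of two vertices at distance $2$. A Hadamard graph of valency $2\mu$ is a distance-regular graph with intersection array $(2\mu,2\mu-1,\mu,1;1,\mu,2\mu-1,2\mu)$. A graph of diameter $d$ is antipodal if ''distance $0$ or $d$'' is an equivalence relation; $mK_{r,r}$ denotes an antipodal $m$-fold cover of $K_{r,r}$. A divisible design $GD(k,\lambda,n,kn)$ is $(X,\mathcal P,\mathcal B)$: $|X|=kn$, $\mathcal P$ a partition of $X$ into classes of size $n$, $\mathcal B$ a collection of $k$-subsets (blocks) each meeting every class in one point, any two points in different classes lying in exactly $\lambda$ blocks; it is resolvable, $RGD(k,\lambda,n)$, if $\mathcal B$ is partitioned into parallel classes (each a partition of $X$). The incidence graph has vertex set $X\cup\mathcal B$ with $x\sim B$ iff $x\in B$. The intersection array $(b_0,\dots,b_{d-1};c_1,\dots,c_d)$ of a distance-regular graph lists, for $v$ at distance $i$ from $u$, the numbers $b_i$ of neighbours of $v$ at distance $i+1$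 and $c_i$ at distance $i-1$ from $u$. *)

From mathcomp Require Import all_boot all_order all_fingroup.
Set Implicit Arguments. Unset Strict Implicit. Unset Printing Implicit Defensive.

Section GraphDefs.
Variable V : finType.
Variable adj : rel V.

Fixpoint reach (k : nat) (u v : V) : bool :=
  if k is k'.+1 then reach k' u v || [exists w, reach k' u w && adj w v]
  else u == v.

(* graph distance (correct for connected graphs: distances are < #|V|) *)
Definition dist (u v : V) : nat := find (fun k => reach k u v) (iota 0 #|V|).

Definition diam : nat := \max_(u : V) \max_(v : V) dist u v.

Definition is_geodesic (s : nat) (p : seq V) : bool :=
  if p is x :: q then [&& size q == s, path adj x q & dist x (last x q) == s]
  else false.

Definition geodesic_transitive (G : {set {perm V}}) (s : nat) : Prop :=
  (exists p, is_geodesic s p) /\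
  forall i, i <= s -> forall p q, is_geodesic i p -> is_geodesic i q ->
    exists2 g, g \in G & map g p = q.

Definition dist_transitive (G : {set {perm V}}) (s : nat) : Prop :=
  forall i, i <= s -> forall u v x y, dist u v = i -> dist x y = i ->
    exists2 g, g \in G & g u = x /\ g v = y.

Definition is_cycle (c : seq V) : bool := [&& 3 <= size c, uniq c & path.cycle adj c].

Definition girth_eq (g : nat) : Prop :=
  (exists c, is_cycle c /\ size c = g) /\ (forall c, is_cycle c -> g <= size c).

Definition bipartite : Prop := exists f : V -> bool, forall x y, adj x y -> f x != f y.

Definition qadj (B C : {set V}) : bool :=
  (B != C) && [exists x in B, exists y in C, adj x y].

Definition Kadj (r : nat) (a b : 'I_r + 'I_r) : bool :=
  match a, b with inl _, inr _ | inr _, inl _ => true | _, _ => false end.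

Definition quotient_is_Krr (P : {set {set V}}) (r : nat) : Prop :=
  exists phi : {set V} -> 'I_r + 'I_r,
    [/\ {in P &, injective phi},
        (forall z, exists2 B, B \in P & phi B = z) &
        {in P &, forall B C, qadj B C = Kadj (phi B) (phi C)}].

Definition is_cover (P : {set {set V}}) : Prop :=
  forall x B C, B \in P -> C \in P -> x \in B -> qadj B C ->
    #|[set y in C | adj x y]| = 1.

(* intersection array (b_0..b_{d-1}; c_1..c_d) of a distance-regular graph *)
Definition nbrs_at (u v : V) (j : nat) : nat := #|[set w | adj v w & dist u w == j]|.

Definition has_intersection_array (bs cs : seq nat) : Prop :=
  [/\ size bs = diam, size cs = diam &
      forall u v, (dist u v < diam -> nbrs_at u v (dist u v).+1 = nth 0 bs (dist u v)) /\
                  (0 < dist u v -> nbrs_at u v (dist u v).-1 = nth 0 cs (dist u v).-1)].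

Definition hadamard_valency (k : nat) : Prop :=
  exists mu, k = 2 * mu /\
    has_intersection_array [:: 2 * mu; 2 * mu - 1; mu; 1] [:: 1; mu; 2 * mu - 1; 2 * mu].

Definition antip (u v : V) : bool := (dist u v == 0) || (dist u v == diam).

Definition antipodal : Prop :=
  [/\ forall x, antip x x, forall x y, antip x y -> antip y x &
      forall x y z, antip x y -> antip y z -> antip x z].

Definition antipodal_classes : {set {set V}} := [set [set y | antip x y] | x : V].

Definition antipodal_cover_Krr (m r : nat) : Prop :=
  [/\ antipodal, (forall B, B \in antipodal_classes -> #|B| = m),
      quotient_is_Krr antipodal_classes r & is_cover antipodal_classes].

(* Gamma is the incidence graph of a resolvable divisible design RGD(k,lam,n):
   points = vertices with side true, blocks = vertices with side false
   (a block is identified with the set of points adjacent to it),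
   Pcl = point classes, Par = parallel classes of blocks. *)
Definition blk (side : V -> bool) (b : V) : {set V} := [set x | side x & adj b x].

Definition RGD_incidence (k lam n : nat) (side : V -> bool)
    (Pcl Par : {set {set V}}) : Prop :=
  let X := [set x | side x] in
  let Bl := [set x | ~~ side x] in
  [/\ (forall x y, adj x y -> side x != side y),
      #|X| = k * n /\ partition Pcl X /\ (forall C, C \in Pcl -> #|C| = n),
      (forall b, b \in Bl -> #|blk side b| = k /\
                   forall C, C \in Pcl -> #|blk side b :&: C| = 1),
      (forall x y, x \in X -> y \in X -> pblock Pcl x != pblock Pcl y ->
                   #|[set b in Bl | adj b x && adj b y]| = lam) &
      partition Par Bl /\
      (forall Q, Q \in Par -> forall x, x \in X -> #|[set b in Q | adj b x]| = 1)].

End GraphDefs.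

(* The N-orbits are independent sets: G is transitive on arcs and permutes the
   orbits, and some edge joins two orbits.  So the bipartition of K_{r,r} lifts to
   a bipartition of Gamma, and the girth is 4.  By the cover property every vertex
   has exactly one neighbour in each orbit of the other side; hence the valency is
   r, two vertices of one orbit are at distance at least 4, and two vertices of the
   same side in different orbits are at distance 2.
   If G is also (G,4)-distance-transitive, c_2 is a constant c >= 2 (read off a
   4-cycle), every vertex at distance 4 from u lies in the orbit of u (some vertex
   of that orbit is), and no vertex is at distance 5.  So the orbits are the
   antipodal classes of a graph of diameter 4.  Counting the edges between the
   neighbours of u and another orbit on the side of u gives r = m c; the
   intersection array, the design (point classes and parallel classes are the
   orbits on the two sides) and, for m = 2, the Hadamard graph follow. *)

From mathcomp Require Import all_boot all_order all_fingroup zify.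
From Stdlib Require Import Classical_Prop.
Set Implicit Arguments. Unset Strict Implicit. Unset Printing Implicit Defensive.

Section Distance.
Variables (V : finType) (adj : rel V).
Hypothesis conn : forall u v, connect adj u v.

Lemma reach_le k l u v : k <= l -> reach adj k u v -> reach adj l u v.
Proof.
elim: l => [|l IHl]; first by rewrite leqn0 => /eqP ->.
by rewrite leq_eqVlt => /orP [/eqP -> //| /IHl Hl /Hl /= ->].
Qed.

Lemma reach_cons k u w v : adj u w -> reach adj k w v -> reach adj k.+1 u v.
Proof.
move=> Huw; elim: k v => [|k IHk] v.
  by move=> /eqP <-; apply/orP; right; apply/existsP; exists u; rewrite eqxx.
move=> /orP [/IHk Hv | /existsP [x /andP [/IHk Hx Hxv]]]; apply/orP; first by left.
by right; apply/existsP; exists x; apply/andP.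
Qed.

Lemma reach_path u p : path adj u p -> reach adj (size p) u (last u p).
Proof.
elim: p u => [|x p IHp] u //= /andP [Hux Hp].
exact: reach_cons Hux (IHp _ Hp).
Qed.

Lemma reach_card u v : reach adj #|V|.-1 u v.
Proof.
have /connectP [p Hp ->] := conn u v.
have [p' Hp' uniq_p' _] := shortenP Hp.
apply: reach_le (reach_path Hp').
by have := max_card (mem (u :: p')); rewrite (card_uniqP uniq_p') /=; case: #|V|.
Qed.

Lemma has_reach u v : has (fun k => reach adj k u v) (iota 0 #|V|).
Proof.
apply/hasP; exists #|V|.-1; last exact: reach_card.
have : 0 < #|V| by apply/card_gt0P; exists u.
by rewrite mem_iota /= add0n; case: #|V|.
Qed.

Lemma dist_lt_card u v : dist adj u v < #|V|.
Proof. by have := has_reach u v; rewrite has_find size_iota. Qed.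

Lemma reach_dist u v : reach adj (dist adj u v) u v.
Proof. by have := nth_find 0 (has_reach u v); rewrite nth_iota ?add0n ?dist_lt_card. Qed.

Lemma reach_lt_dist u v k : k < dist adj u v -> ~~ reach adj k u v.
Proof.
move=> lt_k; have lt_kV := ltn_trans lt_k (dist_lt_card u v).
by have := before_find 0 lt_k; rewrite nth_iota // add0n => ->.
Qed.

Lemma dist_le_reach u v k : (dist adj u v <= k) = reach adj k u v.
Proof.
apply/idP/idP => [le_dk | Hk]; first exact: reach_le le_dk (reach_dist u v).
by rewrite leqNgt; apply/negP => /reach_lt_dist; rewrite Hk.
Qed.

Lemma dist_eq0 u v : (dist adj u v == 0) = (u == v).
Proof. by rewrite -leqn0 dist_le_reach. Qed.

Lemma dist_refl u : dist adj u u = 0.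
Proof. by apply/eqP; rewrite dist_eq0. Qed.

Lemma dist_adjr u v w : adj v w -> dist adj u w <= (dist adj u v).+1.
Proof.
move=> Hvw; rewrite dist_le_reach /=; apply/orP; right.
by apply/existsP; exists v; rewrite reach_dist.
Qed.

Lemma dist_pred_adj u v : 0 < dist adj u v ->
  exists2 w, dist adj u w = (dist adj u v).-1 & adj w v.
Proof.
have := reach_dist u v; have := @reach_lt_dist u v.
case Ed: (dist adj u v) => [//|d] lt_d /= /orP [Hd | /existsP [w /andP [Hw Hwv]]] _.
  by rewrite (negbTE (lt_d d (ltnSn d))) in Hd.
exists w => //; apply/eqP; rewrite eqn_leq dist_le_reach Hw /=.
by have := dist_adjr u Hwv; rewrite Ed.
Qed.

Lemma dist_ex u v j : j <= dist adj u v -> exists x, dist adj u x = j.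
Proof.
move Ed: (dist adj u v) => d; elim: d v Ed => [|d IHd] v Ed.
  by rewrite leqn0 => /eqP ->; exists v.
rewrite leq_eqVlt => /orP [/eqP ->|lt_jd]; first by exists v.
have [|w Hw _] := @dist_pred_adj u v; first by rewrite Ed.
by apply: (IHd w); rewrite // Hw Ed.
Qed.

Lemma dist_le_diam u v : dist adj u v <= diam adj.
Proof.
apply: leq_trans (@leq_bigmax V (fun v => dist adj u v) v) _.
exact: (@leq_bigmax V (fun u => \max_v dist adj u v) u).
Qed.

Hypothesis sym : symmetric adj.
Hypothesis irr : irreflexive adj.

Lemma dist_eq1 u v : (dist adj u v == 1) = adj u v.
Proof.
apply/idP/idP => [/eqP d1 | Huv].
  have := reach_dist u v; rewrite d1 /= => /orP [/eqP Euv | /existsP [w /andP [/eqP -> //]]].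
  by move: d1; rewrite Euv dist_refl.
rewrite eqn_leq dist_le_reach /= lt0n dist_eq0; apply/andP; split.
  by apply/orP; right; apply/existsP; exists u; rewrite eqxx.
by apply: contraTneq Huv => ->; rewrite irr.
Qed.

Definition common_nbrs (a b : V) : nat := #|[set w | adj a w && adj w b]|.

Lemma common_nbrs_perm (g : {perm V}) a b :
  (forall x y, adj (g x) (g y) = adj x y) ->
  common_nbrs (g a) (g b) = common_nbrs a b.
Proof.
move=> g_adj; rewrite /common_nbrs -[RHS](card_imset _ (@perm_inj _ g)).
apply: eq_card => w; rewrite -[w](permKV g) mem_imset; last exact: perm_inj.
by rewrite !inE !g_adj.
Qed.

Lemma nbrs_at1 u v : nbrs_at adj u v 1 = common_nbrs u v.
Proof. by apply: eq_card => w; rewrite !inE dist_eq1 andbC (sym w v). Qed.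

Lemma nbrs_at_adj u v : adj u v -> nbrs_at adj u v 0 = 1.
Proof.
move=> Huv; rewrite -(cards1 u); apply: eq_card => w; rewrite !inE dist_eq0 eq_sym.
by case: eqVneq => [->|]; rewrite ?andbF ?andbT // sym.
Qed.

Lemma nbrs_at_gt_diam u v k : diam adj < k -> nbrs_at adj u v k = 0.
Proof.
move=> lt_dk; apply/eqP; rewrite cards_eq0 -subset0; apply/subsetP => w.
by rewrite inE => /andP [_ /eqP Dk]; move: (dist_le_diam u w); rewrite Dk leqNgt lt_dk.
Qed.

End Distance.

Section TwoColouring.
Variables (V : finType) (adj : rel V) (f : V -> bool).
Hypothesis f_adj : forall x y, adj x y -> f x != f y.

Lemma path_colour x p : path adj x p -> f (last x p) = f x (+) odd (size p).
Proof.
elim: p x => [|y p IHp] x /=; first by rewrite addbF.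
case/andP=> /f_adj f_xy /IHp ->.
by move: f_xy; case: (f x); case: (f y); case: (odd _).
Qed.

Lemma cycle_even c : path.cycle adj c -> ~~ odd (size c).
Proof.
case: c => [//|x p] /= /path_colour; rewrite last_rcons size_rcons /=.
by case: (f x); case: (odd _).
Qed.

Lemma girth_even g : girth_eq adj g -> ~~ odd g.
Proof. by case=> -[c [/and3P [_ _ /cycle_even even_c] <-]] _. Qed.

Hypothesis conn : forall u v, connect adj u v.

Lemma odd_dist u v : odd (dist adj u v) = (f u != f v).
Proof.
move Ed: (dist adj u v) => d; elim: d v Ed => [|d IHd] v Ed.
  by move/eqP: Ed; rewrite (dist_eq0 conn) => /eqP ->; rewrite eqxx.
have [|w Hw Hwv] := @dist_pred_adj _ _ conn u v; first by rewrite Ed.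
rewrite Ed /= in Hw; rewrite /= (IHd _ Hw).
by move: (f_adj Hwv); case: (f u); case: (f w); case: (f v).
Qed.

Lemma dist_same_colour_le2 a b :
  a != b -> f a = f b -> dist adj a b <= 2 -> dist adj a b = 2.
Proof.
move=> Nab Fab; have := odd_dist a b; rewrite Fab eqxx.
case Ed: (dist adj a b) => [|[|[|d]]] //= _ _.
by move/eqP: Ed; rewrite (dist_eq0 conn) (negbTE Nab).
Qed.

Hypothesis sym : symmetric adj.

Lemma dist_adj_cases u v w : adj v w ->
  dist adj u w = (dist adj u v).+1 \/ 0 < dist adj u v /\ dist adj u w = (dist adj u v).-1.
Proof.
move=> Hvw; have Hwv : adj w v by rewrite sym.
have := dist_adjr conn u Hvw; have := dist_adjr conn u Hwv.
have : odd (dist adj u w) = ~~ odd (dist adj u v).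
  by rewrite !odd_dist; move: (f_adj Hvw); case: (f u); case: (f v); case: (f w).
move: (dist adj u w) (dist adj u v) => a b odd_ab le_ba le_ab.
have [[-> b_gt0] | [a_b | ->]] : a = b.-1 /\ 0 < b \/ a = b \/ a = b.+1 by lia.
- by right.
- by rewrite a_b in odd_ab; case: (odd b) odd_ab.
- by left.
Qed.

Lemma nbrs_at_split u v : 0 < dist adj u v ->
  nbrs_at adj u v (dist adj u v).-1 + nbrs_at adj u v (dist adj u v).+1 =
  #|[set w | adj v w]|.
Proof.
move=> d_gt0; rewrite -(cardsID [set w | dist adj u w == (dist adj u v).-1]).
congr (_ + _); apply: eq_card => w; rewrite !inE andbC //.
case Hvw: (adj v w); rewrite ?andbF ?andbT //.
have ltd : (dist adj u v).-1 < (dist adj u v).+1 := leq_ltn_trans (leq_pred _) (ltnSn _).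
by case: (dist_adj_cases u Hvw) => [|[_]] ->; rewrite eqxx ?(ltn_eqF ltd) ?(gtn_eqF ltd).
Qed.

End TwoColouring.

Lemma double_count (T1 T2 : finType) (A : {set T1}) (B : {set T2}) (R : T1 -> T2 -> bool) :
  \sum_(a in A) #|[set b in B | R a b]| = \sum_(b in B) #|[set a in A | R a b]|.
Proof.
have cardE (T : finType) (C : {set T}) (Q : pred T) :
    #|[set x in C | Q x]| = \sum_(x in C) Q x.
  rewrite -sum1_card big_mkcond [RHS]big_mkcond /=.
  by apply: eq_bigr => x _; rewrite !inE; case: (x \in C); case: (Q x).
under eq_bigr do rewrite cardE.
under [RHS]eq_bigr do rewrite cardE.
exact: exchange_big.
Qed.

Definition is_inl (A B : Type) (z : A + B) : bool := if z is inl _ then true else false.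

Lemma Kadj_is_inl r (a b : 'I_r + 'I_r) : Kadj a b = (is_inl a != is_inl b).
Proof. by case: a; case: b. Qed.

Lemma card_Kside r b : #|[set z : 'I_r + 'I_r | is_inl z == b]| = r.
Proof.
have inj_b : injective (if b then @inl 'I_r 'I_r else @inr 'I_r 'I_r).
  by case: b => x y [].
rewrite -[RHS]card_ord -cardsT -(card_imset _ inj_b); apply: eq_card => z.
rewrite inE; apply/eqP/imsetP => [<- | [x _ ->]]; last by case: b {inj_b}.
by case: z => x; exists x.
Qed.

Lemma orbit_perm_normal (T : finType) (G N : {group {perm T}}) g x y :
  (N <| G)%g -> g \in G -> (g y \in orbit 'P N (g x)) = (y \in orbit 'P N x).
Proof. by move=> /normal_norm/subsetP nNG /nNG/normP {1}<-; apply: orbit_conjsg. Qed.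

Section OrbitCover.
Variables (V : finType) (adj : rel V) (G N : {group {perm V}}) (m r c : nat).
Variable phi : {set V} -> 'I_r + 'I_r.
Hypothesis sym : symmetric adj.
Hypothesis irr : irreflexive adj.
Hypothesis conn : forall u v, connect adj u v.
Hypothesis geo : geodesic_transitive adj G 3.
Hypothesis nNG : (N <| G)%g.
Hypothesis orbit_size : forall x, #|orbit 'P N x| = m.
Hypothesis m_gt1 : 1 < m.
Hypothesis r_gt1 : 1 < r.

Local Notation orb x := (orbit 'P N x).
Let P := orbit 'P N @: [set: V].

Hypothesis phi_inj : {in P &, injective phi}.
Hypothesis phi_surj : forall z, exists2 B, B \in P & phi B = z.
Hypothesis phi_adj : {in P &, forall B C, qadj adj B C = Kadj (phi B) (phi C)}.
Hypothesis cover : is_cover adj P.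

Lemma orbit_in_P x : orb x \in P.
Proof. exact: imset_f. Qed.

Lemma P_orbit B x : B \in P -> x \in B -> B = orb x.
Proof. by case/imsetP => y _ -> /orbit_eqP ->. Qed.

Lemma exists_edge_between_orbits : exists x y, adj x y /\ orb x != orb y.
Proof.
have [B PB phiB] := phi_surj (inl (Ordinal (ltnW r_gt1))).
have [C PC phiC] := phi_surj (inr (Ordinal (ltnW r_gt1))).
have := phi_adj PB PC; rewrite phiB phiC /qadj.
case/andP=> NBC /existsP [x /andP [Bx /existsP [y /andP [Cy Hxy]]]].
by exists x, y; rewrite -(P_orbit PB Bx) -(P_orbit PC Cy).
Qed.

Lemma edge_between_orbits x y : adj x y -> orb x != orb y.
Proof.
have arc z t : adj z t -> is_geodesic adj 1 [:: z; t].
  by move=> Hzt; rewrite /= Hzt (dist_eq1 conn irr).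
move=> /arc Gxy; have [x0 [y0 [/arc Gxy0]]] := exists_edge_between_orbits.
have [g Gg /= [<- <-]] := geo.2 1 isT _ _ Gxy Gxy0.
apply: contra => /eqP Exy.
by rewrite eq_sym; apply/eqP/orbit_eqP; rewrite (orbit_perm_normal _ _ nNG Gg) Exy orbit_refl.
Qed.

Definition side x := is_inl (phi (orb x)).

Lemma side_orbit B x : B \in P -> x \in B -> side x = is_inl (phi B).
Proof. by move=> PB Bx; rewrite /side -(P_orbit PB Bx). Qed.

Lemma side_adj x y : adj x y -> side x != side y.
Proof.
move=> Hxy; rewrite -Kadj_is_inl -phi_adj ?orbit_in_P // /qadj edge_between_orbits //.
by apply/existsP; exists x; rewrite orbit_refl; apply/existsP; exists y; rewrite orbit_refl.
Qed.

Lemma cover_card x B : B \in P -> is_inl (phi B) != side x ->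
  #|[set y in B | adj x y]| = 1.
Proof.
move=> PB side_B; apply: (cover (orbit_in_P x) PB (orbit_refl _ _ x)).
by rewrite phi_adj ?orbit_in_P // Kadj_is_inl eq_sym.
Qed.

Lemma cover_nbr x B : B \in P -> is_inl (phi B) != side x ->
  exists2 y, y \in B & adj x y.
Proof.
move=> PB /(cover_card PB)/eqP/cards1P [y By].
by have := set11 y; rewrite -By inE => /andP [Hy Hxy]; exists y.
Qed.

Lemma cover_nbr_uniq x B y1 y2 : B \in P -> is_inl (phi B) != side x ->
  y1 \in B -> y2 \in B -> adj x y1 -> adj x y2 -> y1 = y2.
Proof.
move=> PB /(cover_card PB)/eqP/cards1P [y By] By1 By2 Hxy1 Hxy2.
have : y1 \in [set y in B | adj x y] by rewrite inE By1.
have : y2 \in [set y in B | adj x y] by rewrite inE By2.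
by rewrite By !inE => /eqP -> /eqP ->.
Qed.

Lemma odd_dist_side u v : odd (dist adj u v) = (side u != side v).
Proof. exact: odd_dist side_adj conn u v. Qed.

Lemma orbit_dist_ge4 x y : y \in orb x -> x != y -> 4 <= dist adj x y.
Proof.
move=> Oxy Nxy; have := odd_dist_side x y; rewrite /side (orbit_eqP Oxy) eqxx.
case Ed: (dist adj x y) => [|[|[|[|d]]]] //= _.
  by move/eqP: Ed; rewrite (dist_eq0 conn) (negbTE Nxy).
have [|w Hw Hwy] := @dist_pred_adj _ _ conn x y; first by rewrite Ed.
have Hxw : adj x w by rewrite -(dist_eq1 conn irr) Hw Ed.
have side_xw : side x != side w := side_adj Hxw.
have Hwx : adj w x by rewrite sym.
by move: Nxy; rewrite (cover_nbr_uniq (orbit_in_P x) side_xw (orbit_refl _ _ x) Oxy Hwx Hwy) eqxx.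
Qed.

Lemma orbit_other x : exists2 y, y \in orb x & x != y.
Proof.
have /card_gt1P [a [b [Oa Ob Nab]]] : 1 < #|orb x| by rewrite orbit_size.
case: (eqVneq x a) => [Exa | Nxa]; last by exists a.
by exists b; rewrite // Exa.
Qed.

Lemma diam_ge4 : 4 <= diam adj.
Proof.
have [u [_ _]] := exists_edge_between_orbits; have [v Ov Nuv] := orbit_other u.
exact: leq_trans (orbit_dist_ge4 Ov Nuv) (dist_le_diam _ _ _).
Qed.

Definition orbits_on b := [set B in P | is_inl (phi B) == b].

Lemma card_orbits_on b : #|orbits_on b| = r.
Proof.
transitivity #|[set z : 'I_r + 'I_r | is_inl z == b]|; last exact: card_Kside.
rewrite -(card_in_imset (f := phi)); last first.
  by move=> B C; rewrite !inE => /andP [PB _] /andP [PC _]; apply: phi_inj.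
apply: eq_card => z; rewrite [in RHS]inE; apply/imsetP/idP => [[B + ->] | side_z].
  by rewrite inE => /andP [].
by have [B PB phiB] := phi_surj z; exists B; rewrite // inE PB phiB.
Qed.

Lemma valency u : #|[set w | adj u w]| = r.
Proof.
rewrite -(card_orbits_on (~~ side u)) -(card_in_imset (f := fun w => orb w)).
  apply: eq_card => B; rewrite inE; apply/imsetP/andP => [[w + ->] | [PB /eqP side_B]].
    rewrite inE => /side_adj side_uw; rewrite orbit_in_P.
    by move: side_uw; rewrite /side; case: (is_inl _); case: (is_inl _).
  have [|w Bw Huw] := cover_nbr (x := u) PB; first by rewrite side_B; case: (side u).
  by exists w; rewrite ?inE // -(P_orbit PB Bw).
move=> w1 w2; rewrite !inE => Huw1 Huw2 E12.
have side_w2u : side w2 != side u by rewrite eq_sym side_adj.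
apply: (cover_nbr_uniq (orbit_in_P w2) side_w2u _ (orbit_refl _ _ w2) Huw1 Huw2).
by rewrite -E12 orbit_refl.
Qed.

Lemma partition_side b : partition (orbits_on b) [set x | side x == b].
Proof.
apply/and3P; split.
- apply/eqP/setP => x; rewrite inE; apply/bigcupP/idP => [[B] | side_x].
    by rewrite inE => /andP [PB /eqP <-] Bx; rewrite (side_orbit PB Bx).
  by exists (orb x); rewrite ?orbit_refl // inE orbit_in_P.
- apply/trivIsetP => A B; rewrite !inE => /andP [PA _] /andP [PB _] NAB.
  rewrite -setI_eq0; apply/eqP/setP => x; rewrite !inE.
  by apply/andP => -[Ax Bx]; move: NAB; rewrite (P_orbit PA Ax) (P_orbit PB Bx) eqxx.
- by rewrite inE; apply/andP => -[/imsetP [x _ /setP /(_ x)]]; rewrite inE orbit_refl.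
Qed.

Lemma pblock_orbits_on b x : side x = b -> pblock (orbits_on b) x = orb x.
Proof.
have [_ triv_b _] := and3P (partition_side b).
move=> side_x; apply: def_pblock triv_b _ (orbit_refl _ _ x).
by rewrite inE orbit_in_P; apply/eqP.
Qed.

Lemma card_side b : #|[set x | side x == b]| = r * m.
Proof.
rewrite (card_partition (partition_side b)) -(card_orbits_on b) -sum_nat_const.
by apply: eq_bigr => B; rewrite inE => /andP [/imsetP [x _ ->] _]; rewrite orbit_size.
Qed.

Lemma block_card b : side b = false -> #|blk adj side b| = r.
Proof.
move=> side_b; rewrite -(valency b); apply: eq_card => x; rewrite !inE andbC.
by case Hbx: (adj b x) => //=; move: (side_adj Hbx); rewrite side_b; case: (side x).
Qed.

Section DistanceTransitive.
Hypothesis Gaut : forall g, g \in G -> forall x y, adj (g x) (g y) = adj x y.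
Hypothesis DT : dist_transitive adj G 4.
Hypothesis girth4 : girth_eq adj 4.

Lemma c2_const : exists2 k, 1 < k & forall x y, dist adj x y = 2 -> common_nbrs adj x y = k.
Proof.
have [[cyc [cyc4 size4]] _] := girth4.
case: cyc cyc4 size4 => [|v0 [|v1 [|v2 [|v3 [|? ?]]]]] //= /and3P [_ uniq_v cyc_v] _.
move: cyc_v uniq_v => /and5P [H01 H12 H23 H30 _].
rewrite /= !inE !negb_or => /andP [/and3P [N01 N02 N03] /andP [/andP [N12 N13] _]].
have D02 : dist adj v0 v2 = 2.
  apply: (dist_same_colour_le2 side_adj conn N02).
    by move: (side_adj H01) (side_adj H12); case: (side v0); case: (side v1); case: (side v2).
  have /eqP D01 : dist adj v0 v1 == 1 by rewrite (dist_eq1 conn irr).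
  by apply: leq_trans (dist_adjr conn v0 H12) _; rewrite D01.
exists (common_nbrs adj v0 v2).
  have <- : #|[set v1; v3]| = 2 by rewrite cards2 N13.
  apply/subset_leq_card/subsetP => w.
  by rewrite !inE => /orP [] /eqP ->; rewrite ?H01 ?H12 // (sym v0 v3) H30 (sym v3 v2).
move=> x y Dxy; have [g Gg [<- <-]] := DT (isT : 2 <= 4) D02 Dxy.
exact: common_nbrs_perm (Gaut Gg).
Qed.

Lemma dist4_orbit u x : dist adj u x = 4 -> x \in orb u.
Proof.
move=> Dux; have [v Ov Nuv] := orbit_other u.
have [y Duy] := dist_ex conn (leq_trans (isT : 3 <= 4) (orbit_dist_ge4 Ov Nuv)).
have side_uy : side u != side y by rewrite -odd_dist_side Duy.
have [z Oz Hyz] := cover_nbr (orbit_in_P u) side_uy.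
have Nuz : u != z by apply: contraTneq Hyz => <-; rewrite sym -(dist_eq1 conn irr) Duy.
have Duz : dist adj u z = 4.
  apply/eqP; rewrite eqn_leq orbit_dist_ge4 // andbT.
  by have := dist_adjr conn u Hyz; rewrite Duy.
have [g Gg [gu gz]] := DT (isT : 4 <= 4) Duz Dux.
by rewrite -gz -gu (orbit_perm_normal _ _ nNG Gg).
Qed.

(* A vertex [w] at distance 5 from [u] would have a vertex [v] at distance 2 whose
   common neighbours with [w] all lie in the orbit of [u]; the cover property
   leaves at most one of them, against c_2 >= 2. *)
Lemma dist_le4 u w : dist adj u w <= 4.
Proof.
rewrite leqNgt; apply/negP => /(dist_ex conn) [{}w Duw].
have [|x Dux Hxw] := @dist_pred_adj _ _ conn u w; first by rewrite Duw.
have [|v Duv Hvx] := @dist_pred_adj _ _ conn u x; first by rewrite Dux Duw.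
rewrite Duw /= in Dux; rewrite Dux /= in Duv.
have side_uv : side u != side v by rewrite -odd_dist_side Duv.
have Dvw : dist adj v w = 2.
  apply: (dist_same_colour_le2 side_adj conn).
  - by apply/eqP => Evw; move: Duv; rewrite Evw Duw.
  - move: (odd_dist_side u v) (odd_dist_side u w); rewrite Duv Duw.
    by case: (side u); case: (side v); case: (side w).
  - apply: leq_trans (dist_adjr conn v Hxw) _.
    by have /eqP -> : dist adj v x == 1 by rewrite (dist_eq1 conn irr).
have in_orbit t : adj v t -> adj t w -> t \in orb u.
  move=> Hvt Htw; apply: dist4_orbit; apply/eqP; rewrite eqn_leq.
  have := dist_adjr conn u Hvt; have := dist_adjr conn u Htw.
  by rewrite Duv Duw ltnS => -> ->.
have [k k_gt1 c2_eq] := c2_const.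
suff : common_nbrs adj v w <= 1 by rewrite c2_eq // leqNgt k_gt1.
apply/card_le1_eqP => t1 t2; rewrite !inE => /andP [Hvt1 Ht1w] /andP [Hvt2 Ht2w].
have [Ot1 Ot2] := (in_orbit _ Hvt1 Ht1w, in_orbit _ Hvt2 Ht2w).
exact: (cover_nbr_uniq (orbit_in_P u) side_uv Ot2 Ot1 Hvt2 Hvt1).
Qed.

Lemma diam4 : diam adj = 4.
Proof.
apply/eqP; rewrite eqn_leq diam_ge4 andbT.
by apply/bigmax_leqP => u _; apply/bigmax_leqP => v _; apply: dist_le4.
Qed.

Lemma dist4E u x : (dist adj u x == 4) = (x \in orb u) && (u != x).
Proof.
apply/idP/andP => [/eqP Dux | [Oux Nux]]; last by rewrite eqn_leq dist_le4 orbit_dist_ge4.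
by split; [exact: dist4_orbit | apply/eqP => Eux; move: Dux; rewrite Eux dist_refl].
Qed.

Lemma dist2_other_orbit u x : side x = side u -> orb x != orb u -> dist adj u x = 2.
Proof.
move=> side_ux Nux; have := odd_dist_side u x; rewrite side_ux eqxx.
have := dist_le4 u x; have := dist4E u x.
case Ed: (dist adj u x) => [|[|[|[|[|d]]]]] //=.
  by move/eqP: Ed; rewrite (dist_eq0 conn) => /eqP Eux; rewrite Eux eqxx in Nux.
by move=> /esym/andP [/orbit_eqP Exu _]; rewrite Exu eqxx in Nux.
Qed.

Lemma nbrs_at_dist3 u v : dist adj u v = 3 -> nbrs_at adj u v 4 = 1.
Proof.
move=> Duv; have side_uv : side u != side v by rewrite -odd_dist_side Duv.
rewrite -[RHS](cover_card (orbit_in_P u) side_uv); apply: eq_card => w; rewrite !inE dist4E.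
case Hvw: (adj v w); rewrite ?andbF ?andbT //; case: eqVneq => [Euw | _]; last by rewrite andbT.
by move: Hvw; rewrite -Euw sym -(dist_eq1 conn irr) Duv.
Qed.

Lemma antipE x y : antip adj x y = (y \in orb x).
Proof.
rewrite /antip diam4 (dist_eq0 conn) dist4E.
by case: eqVneq => [->|_]; rewrite ?orbit_refl ?andbT.
Qed.

Lemma antipodal_classesE : antipodal_classes adj = P.
Proof.
apply/setP => B; apply/imsetP/imsetP => -[x _ ->]; exists x => //.
  by apply/setP => y; rewrite inE antipE.
by apply/setP => y; rewrite inE antipE.
Qed.

Lemma antipodal_cover : antipodal_cover_Krr adj m r.
Proof.
rewrite /antipodal_cover_Krr antipodal_classesE; split=> //.
- split=> [x | x y | x y z]; rewrite !antipE; first exact: orbit_refl.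
    by rewrite orbit_sym.
  by move=> Oxy Oyz; apply: orbit_trans Oyz Oxy.
- by move=> B /imsetP [x _ ->]; rewrite orbit_size.
- by exists phi.
Qed.

Section CommonNeighbours.
Hypothesis c2_eq : forall x y, dist adj x y = 2 -> common_nbrs adj x y = c.

Lemma common_nbrs_same_side u v : side u = side v -> orb u != orb v -> common_nbrs adj u v = c.
Proof. by move=> side_uv Nuv; rewrite c2_eq // dist2_other_orbit // eq_sym. Qed.

Lemma r_eq_mc : r = m * c.
Proof.
have [u [_ _]] := exists_edge_between_orbits.
have [D PD [side_D ND]] : exists2 D, D \in P & is_inl (phi D) = side u /\ D != orb u.
  have /card_gt1P [B1 [B2 []]] : 1 < #|orbits_on (side u)|.
    by rewrite card_orbits_on.
  rewrite !inE => /andP [P1 /eqP s1] /andP [P2 /eqP s2] N12.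
  case: (eqVneq B1 (orb u)) => [E1 | N1]; last by exists B1.
  by exists B2 => //; split => //; rewrite -E1 eq_sym.
have := double_count [set w | adj u w] D adj.
rewrite (eq_bigr (fun _ => 1)) => [|w]; last first.
  by rewrite inE => Huw; apply: cover_card; rewrite // side_D; apply: side_adj.
rewrite sum1_card valency (eq_bigr (fun _ => c)) => [|x Dx]; last first.
  have side_ux : side u = side x by rewrite (side_orbit PD Dx).
  have Nux : orb u != orb x by rewrite -(P_orbit PD Dx) eq_sym.
  by rewrite -(common_nbrs_same_side side_ux Nux); apply: eq_card => w; rewrite !inE.
rewrite sum_nat_const => ->.
by case/imsetP: PD => y _ ->; rewrite orbit_size.
Qed.

Lemma intersection_array :
  has_intersection_array adj [:: r; r - 1; r - c; 1] [:: 1; c; r - 1; r].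
Proof.
rewrite /has_intersection_array diam4; split=> // u v.
have := @nbrs_at_split _ _ _ side_adj conn sym u v; rewrite valency.
have := dist_le4 u v; case Duv: (dist adj u v) => [|[|[|[|[|d]]]]] //= _ split_uv.
- move/eqP: Duv; rewrite (dist_eq0 conn) => /eqP <-; split=> // _.
  rewrite (nbrs_at1 conn sym irr) -(valency u); apply: eq_card => w.
  by rewrite !inE (sym w u) andbb.
- have Huv : adj u v by rewrite -(dist_eq1 conn irr) Duv.
  by rewrite (nbrs_at_adj conn sym Huv) in split_uv *; rewrite -(split_uv isT) addKn.
- rewrite (nbrs_at1 conn sym irr) c2_eq // in split_uv *.
  by rewrite -(split_uv isT) addKn.
- by rewrite (nbrs_at_dist3 Duv) in split_uv *; rewrite -(split_uv isT) addnK.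
- rewrite (@nbrs_at_gt_diam _ _ u v 5) ?diam4 // addn0 in split_uv.
  by split=> // _; rewrite split_uv.
Qed.

Lemma hadamard_of_m2 : m = 2 -> hadamard_valency adj r.
Proof.
move=> m2; have := intersection_array; rewrite r_eq_mc m2 => arr; exists c; split=> //.
by move: arr; rewrite (_ : 2 * c - c = c) // mul2n -addnn addnK.
Qed.

Lemma resolvable_design :
  RGD_incidence adj r c m side (orbits_on true) (orbits_on false).
Proof.
have sideT : [set x | side x] = [set x | side x == true].
  by apply/setP => x; rewrite !inE eqb_id.
have sideF : [set x | ~~ side x] = [set x | side x == false].
  by apply/setP => x; rewrite !inE eqbF_neg.
rewrite /RGD_incidence /= sideT sideF; split.
- exact: side_adj.
- split; [exact: card_side | split; [exact: partition_side |]].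
  by move=> C; rewrite inE => /andP [/imsetP [x _ ->] _]; rewrite orbit_size.
- move=> b; rewrite inE => /eqP side_b; split; first exact: block_card.
  move=> C; rewrite inE => /andP [PC /eqP side_C].
  rewrite -(cover_card (x := b) PC) ?side_C ?side_b //.
  apply: eq_card => x; rewrite !inE; case Cx: (x \in C); rewrite ?andbF //=.
  by rewrite (side_orbit PC Cx) side_C andbT.
- move=> x y; rewrite !inE => /eqP side_x /eqP side_y.
  rewrite !pblock_orbits_on // => Nxy.
  rewrite -(common_nbrs_same_side _ Nxy); last by rewrite side_x side_y.
  apply: eq_card => w; rewrite !inE (sym w x) (sym w y).
  case Hxw: (adj x w); rewrite ?andbF //=; move: (side_adj Hxw); rewrite side_x.
  by case: (side w).
- split; first exact: partition_side.
  move=> Q; rewrite inE => /andP [PQ /eqP side_Q] x; rewrite inE => /eqP side_x.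
  rewrite -(cover_card (x := x) PQ) ?side_Q ?side_x //.
  by apply: eq_card => b; rewrite !inE sym.
Qed.

Lemma block_meet Q1 Q2 b1 b2 : Q1 \in orbits_on false -> Q2 \in orbits_on false ->
  Q1 != Q2 -> b1 \in Q1 -> b2 \in Q2 -> #|blk adj side b1 :&: blk adj side b2| = c.
Proof.
rewrite !inE => /andP [PQ1 /eqP side_Q1] /andP [PQ2 /eqP side_Q2] NQ12 Q1b1 Q2b2.
rewrite -(common_nbrs_same_side (u := b1) (v := b2)); last first.
- by rewrite -(P_orbit PQ1 Q1b1) -(P_orbit PQ2 Q2b2).
- by rewrite (side_orbit PQ1 Q1b1) (side_orbit PQ2 Q2b2) side_Q1 side_Q2.
apply: eq_card => w; rewrite !inE (sym w b2).
case Hw: (adj b1 w); rewrite ?andbF ?andbT //=; move: (side_adj Hw).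
by rewrite (side_orbit PQ1 Q1b1) side_Q1; case: (side w).
Qed.

End CommonNeighbours.
End DistanceTransitive.
End OrbitCover.

Theorem lemma5p10 (V : finType) (adj : rel V) (G N : {group {perm V}}) (m r : nat) :
  symmetric adj -> irreflexive adj -> (forall u v, connect adj u v) ->
  (forall g, g \in G -> forall x y, adj (g x) (g y) = adj x y) ->
  geodesic_transitive adj G 3 ->
  (girth_eq adj 4 \/ girth_eq adj 5) ->
  (N <| G)%g -> 2 <= m -> (forall x, #|orbit 'P N x| = m) ->
  3 <= r ->
  quotient_is_Krr adj (orbit 'P N @: [set: V]) r ->
  is_cover adj (orbit 'P N @: [set: V]) ->
  [/\ bipartite adj, girth_eq adj 4, 4 <= diam adj &
    [\/ m = 2 /\ hadamard_valency adj r,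
        exists c2,
          [/\ dist_transitive adj G (diam adj),
              antipodal_cover_Krr adj m r,
              (exists side Pcl Par,
                  RGD_incidence adj r c2 m side Pcl Par /\
                  (forall Q1 Q2 b1 b2, Q1 \in Par -> Q2 \in Par -> Q1 != Q2 ->
                     b1 \in Q1 -> b2 \in Q2 ->
                     #|blk adj side b1 :&: blk adj side b2| = c2)),
              r = m * c2 /\
              has_intersection_array adj [:: r; r - 1; r - c2; 1] [:: 1; c2; r - 1; r] &
              2 <= c2 /\ 3 <= m]
      | ~ dist_transitive adj G 4]].
Proof.
move=> sym irr conn Gaut geo girth45 nNG m_gt1 orbit_size r_ge3.
move=> [phi [phi_inj phi_surj phi_adj]] cover.
have r_gt1 : 1 < r by apply: leq_trans r_ge3.
have side_adjN x y : adj x y -> side N phi x != side N phi y.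
  by apply: (side_adj (G := G)).
have girth4 : girth_eq adj 4 by case: girth45 => // /(girth_even side_adjN).
split=> //; first by exists (side N phi).
  by apply: (diam_ge4 (G := G) (N := N) (m := m) (phi := phi)).
have [DT|notDT] := classic (dist_transitive adj G 4); last exact: Or33.
have [c c_gt1 c2_eq] :=
  c2_const sym irr conn geo nNG r_gt1 phi_surj phi_adj Gaut DT girth4.
have r_mc : r = m * c by apply: (r_eq_mc (G := G) (N := N) (phi := phi)).
have [m2|m_ne2] := eqVneq m 2.
  by apply: Or31; split=> //; apply: (hadamard_of_m2 (G := G) (N := N) (phi := phi) (c := c)).
apply: Or32; exists c; split=> //.
- by rewrite (diam4 (G := G) (N := N) (m := m) (phi := phi)).
- by apply: (antipodal_cover (G := G) (N := N) (phi := phi)).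
- exists (side N phi), (orbits_on N phi true), (orbits_on N phi false); split.
    by apply: (resolvable_design (G := G)).
  by move=> Q1 Q2 b1 b2; apply: (block_meet (G := G) (m := m)).
- by split=> //; apply: (intersection_array (G := G) (N := N) (phi := phi)).
- by split=> //; rewrite ltn_neqAle eq_sym m_ne2.
Qed.
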